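(* Let $p=d/n$, and let $\sigma,\theta$ satisfy the hypotheses: $\theta>1$, $\sigma\in(0,1]$, $\left(\frac{\sigma e d}{2\theta}\right)^{\theta}\le \frac{\sigma}{2e}$ and $d=o(n^{1-1/\theta})$. Let $\Delta,\tau>0$ with $m:=(\Delta-2\theta)\tau>1$, $$\left(\frac{\sigma e d}{m}\right)^{m}\le \frac{\sigma}{4e},$$ and $d=o(n^{1-1/m})$. Then w.h.p. $G_{n,p}$ contains no pair of sets $T\subseteq S\subseteq[n]$ with $|S|=s\le\sigma n$, $|T|\ge \tau s$, and $d_S(v)\ge \Delta$ for every $v\in T$.
   Context: $G_{n,p}$ is the binomial random graph on $[n]$; $d_S(v)$ denotes the number of neighbors of $v$ in $S$. W.h.p. means with probability tending to 1 as $n\to\infty$. *)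

From Stdlib Require Import Reals.
From mathcomp Require Import all_boot.
Set Implicit Arguments. Unset Strict Implicit. Unset Printing Implicit Defensive.

Definition Rleb (x y : R) : bool := if Rle_dec x y then true else false.

Definition edges (n : nat) : {set {set 'I_n}} := [set e : {set 'I_n} | #|e| == 2].

(* d_S(v) : number of neighbours of v in S in the graph G (G \subset edges n) *)
Definition degS (n : nat) (G : {set {set 'I_n}}) (S : {set 'I_n}) (v : 'I_n) : nat :=
  #|[set u in S | [set u; v] \in G]|.

Definition gnp_weight (n : nat) (p : R) (G : {set {set 'I_n}}) : R :=
  Rmult (pow p #|G|) (pow (Rminus 1 p) (subn 'C(n, 2) #|G|)).

Definition gnp_prob (n : nat) (p : R) (P : {set {set 'I_n}} -> bool) : R :=
  \big[Rplus/R0]_(G : {set {set 'I_n}} | (G \subset edges n) && P G) gnp_weight p G.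

Definition bad_pair (n : nat) (sigma tau Delta : R) (G : {set {set 'I_n}}) : bool :=
  [exists S : {set 'I_n}, exists T : {set 'I_n},
    [&& T \subset S, 0 < #|S|,
        Rleb (INR #|S|) (Rmult sigma (INR n)),
        Rleb (Rmult tau (INR #|S|)) (INR #|T|)
      & [forall v in T, Rleb Delta (INR (degS G S v))]]].

From HB Require Import structures.
From Stdlib Require Import Reals Lra Lia ZArith.
From mathcomp Require Import all_boot zify.
Open Scope R_scope.
Set Implicit Arguments. Unset Strict Implicit.

(* The proof is a first-moment
   argument on "c-dense sets": nonempty U with |U| <= sigma n spanning at least
   c |U| edges.
   1. Basic facts on G(n,p) as the weighted sum gnp_prob: a fixed set of K
      pairs is present with probability p^|K|, complements, and the union bound.
   2. Degree counting: sum_(v in T) d_S(v) <= e(S) + e(T).  Hence if T \subseteq S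
      is a bad pair, either T is theta-dense or S is m-dense.
   3. First moment: the expected number of c-dense sets of size s is at most
      C(n,s) C(C(s,2), ceil(cs)) p^ceil(cs) <= (z^(c-1) / 2)^s, z = s/(sigma n),
      using C(N,k) <= (eN/k)^k and the density condition
      (sigma e d / 2c)^c <= sigma / 2e.  Summing over s, the small sizes
      contribute o(1) and the large ones a geometric tail, so c-dense sets
      disappear w.h.p. for every c > 1 satisfying the density condition.
   4. The theorem: apply 3 with c = theta and with c = m (whose condition
      follows from the hypothesis with sigma / 4e), and conclude by step 2. *)

HB.instance Definition _ :=
  Monoid.isComLaw.Build R R0 Rplus (fun x y z => esym (Rplus_assoc x y z)) Rplus_comm Rplus_0_l.

Lemma big_Rmult_l (I : Type) (r : seq I) (P : pred I) (F : I -> R) c :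
  c * \big[Rplus/R0]_(i <- r | P i) F i = \big[Rplus/R0]_(i <- r | P i) (c * F i).
Proof.
apply: (big_rec2 (fun x y => c * x = y)); first by rewrite Rmult_0_r.
by move=> i y1 y2 _ <-; rewrite Rmult_plus_distr_l.
Qed.

Lemma big_Rle (I : Type) (r : seq I) (P : pred I) (F G : I -> R) :
  (forall i, P i -> F i <= G i) ->
  \big[Rplus/R0]_(i <- r | P i) F i <= \big[Rplus/R0]_(i <- r | P i) G i.
Proof. by move=> FG; apply: (big_ind2 (fun x y => x <= y)) => //; move=> *; lra. Qed.

Lemma big_Rge0 (I : Type) (r : seq I) (P : pred I) (F : I -> R) :
  (forall i, P i -> 0 <= F i) -> 0 <= \big[Rplus/R0]_(i <- r | P i) F i.
Proof. by move=> F0; apply: (big_ind (fun x => 0 <= x)) => //; move=> *; lra. Qed.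

Lemma big_Rconst (I : finType) (A : {pred I}) c :
  \big[Rplus/R0]_(i in A) c = INR #|A| * c.
Proof.
rewrite big_const; elim: #|A| => [|k IH]; first by rewrite /=; ring.
by rewrite iterS IH S_INR; ring.
Qed.

Lemma INR_sum (I : finType) (A : {pred I}) (F : I -> nat) :
  INR (\sum_(i in A) F i)%N = \big[Rplus/R0]_(i in A) INR (F i).
Proof. exact: (big_morph INR plus_INR). Qed.

Section BinomialRandomGraph.

Variable p : R.

(* The product measure of "every element of B is present with probability p",
   restricted to the subsets of A, gives mass p^|K| to the supersets of K. *)
Lemma superset_mass (X : finType) (A K : {set X}) : K \subset A ->
  \big[Rplus/R0]_(B : {set X} | (B \subset A) && (K \subset B))
     (p ^ #|B| * (1 - p) ^ (#|A| - #|B|)) = p ^ #|K|.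
Proof.
move=> KA; move AK : #|A :\: K| => k; elim: k A K AK KA => [|k IH] A K AK KA.
  have -> : A = K by apply/eqP; rewrite eqEsubset KA -setD_eq0 -cards_eq0 AK.
  rewrite (eq_bigl (pred1 K)) => [|B]; last by rewrite /= -eqEsubset eq_sym.
  by rewrite big_pred1_eq subnn /= Rmult_1_r.
have /card_gt0P [a] : (0 < #|A :\: K|)%N by rewrite AK.
rewrite inE => /andP [aK aA].
have card_rest (A' : {set X}) : a \in A' -> #|A' :\: K| = k.+1 -> #|A' :\: (a |: K)| = k.
  by move=> aA'; rewrite (cardsD1 a) inE aK aA' setDDl setUC => -[].
(* Split according to whether a belongs to B; both halves follow from IH. *)
rewrite (bigID [pred B : {set X} | a \in B]) /=.
rewrite (eq_bigl (fun B : {set X} => (B \subset A) && (a |: K \subset B))); last first.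
  by move=> B; rewrite subUset sub1set; case: (a \in B); rewrite ?andbF ?andbT.
rewrite IH ?card_rest ?subUset ?sub1set ?aA ?KA // cardsU1 aK add1n /=.
rewrite (eq_bigl (fun B : {set X} => (B \subset A :\ a) && (K \subset B))); last first.
  by move=> B; rewrite subsetD1 andbAC.
rewrite (eq_bigr (fun B : {set X} => (1 - p) * (p ^ #|B| * (1 - p) ^ (#|A :\ a| - #|B|)))); last first.
  move=> B /andP [BA _].
  by rewrite (cardsD1 a A) aA add1n subSn ?subset_leq_card //=; ring.
rewrite -big_Rmult_l IH /=; first ring.
- by rewrite setDDl card_rest.
- by rewrite subsetD1 KA.
Qed.

Variable n : nat.

Lemma card_edges : #|edges n| = 'C(n, 2).
Proof. by rewrite /edges card_draws card_ord. Qed.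

Lemma gnp_prob_contains (K : {set {set 'I_n}}) :
  K \subset edges n -> gnp_prob p (fun G : {set {set 'I_n}} => K \subset G) = p ^ #|K|.
Proof. by move=> KE; rewrite -(superset_mass KE) card_edges. Qed.

Lemma gnp_prob_total : gnp_prob p (fun _ : {set {set 'I_n}} => true) = 1.
Proof.
rewrite -(pow_O p) -(cards0 {set 'I_n}) -gnp_prob_contains ?sub0set //.
by apply: eq_bigl => G; rewrite sub0set.
Qed.

Lemma gnp_probC (A : pred {set {set 'I_n}}) :
  gnp_prob p (fun G => ~~ A G) = 1 - gnp_prob p A.
Proof.
rewrite -gnp_prob_total /gnp_prob [in RHS](bigID A) /=.
have drop_true (B : pred {set {set 'I_n}}) :
  \big[Rplus/R0]_(G : {set {set 'I_n}} | (G \subset edges n) && true && B G) gnp_weight p G =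
  \big[Rplus/R0]_(G : {set {set 'I_n}} | (G \subset edges n) && B G) gnp_weight p G.
  by apply: eq_bigl => G; rewrite andbT.
by rewrite (drop_true A) (drop_true (fun G => ~~ A G)) /=; ring.
Qed.

Hypothesis p01 : 0 <= p <= 1.

Lemma gnp_weight_ge0 (G : {set {set 'I_n}}) : 0 <= gnp_weight p G.
Proof. by apply: Rmult_le_pos; apply: pow_le; lra. Qed.

Lemma gnp_prob_ge0 (A : pred {set {set 'I_n}}) : 0 <= gnp_prob p A.
Proof. by apply: big_Rge0 => G _; exact: gnp_weight_ge0. Qed.

Lemma gnp_union_bound (I : finType) (J : pred I)
    (A : pred {set {set 'I_n}}) (Q : I -> pred {set {set 'I_n}}) :
  (forall G : {set {set 'I_n}}, G \subset edges n -> A G -> exists2 i, J i & Q i G) ->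
  gnp_prob p A <= \big[Rplus/R0]_(i | J i) gnp_prob p (Q i).
Proof.
move=> witness; rewrite /gnp_prob.
under [X in _ <= X]eq_bigr do rewrite big_mkcondr.
rewrite exchange_big big_mkcondr /=.
apply: big_Rle => G EG; case: ifP => [AG | _]; last first.
  by apply: big_Rge0 => i _; case: ifP => _; [exact: gnp_weight_ge0 | lra].
have [i Ji QiG] := witness G EG AG.
rewrite (bigD1 i Ji) /= QiG -[X in X <= _]Rplus_0_r; apply: Rplus_le_compat_l.
by apply: big_Rge0 => j _; case: ifP => _; [exact: gnp_weight_ge0 | lra].
Qed.

Lemma gnp_prob_le_union (A B C : pred {set {set 'I_n}}) :
  (forall G : {set {set 'I_n}}, G \subset edges n -> A G -> B G || C G) ->
  gnp_prob p A <= gnp_prob p B + gnp_prob p C.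
Proof.
move=> ABC; apply: Rle_trans (@gnp_union_bound bool (fun _ => true) A
                                     (fun b => if b then B else C) _) _.
  by move=> G GE /(ABC G GE) /orP [BG | CG]; [exists true | exists false].
by rewrite big_bool; right.
Qed.

End BinomialRandomGraph.

Section DegreeCounting.

Variables (n : nat) (G : {set {set 'I_n}}).
Hypothesis G_simple : G \subset edges n.

Definition edges_in (U : {set 'I_n}) : nat := #|[set e in G | e \subset U]|.

(* Each neighbour u of v in S yields the edge {u, v}, which lies in S and
   contains v; distinct neighbours yield distinct edges. *)
Lemma degS_le_incident (S : {set 'I_n}) v : v \in S ->
  (degS G S v <= #|[set e in G | (e \subset S) && (v \in e)]|)%N.
Proof.
move=> vS; rewrite /degS -(card_in_imset (f := fun u => [set u; v])); last first.
  move=> u u'; rewrite !inE => /andP [_ uvG] _ /setP /(_ u).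
  rewrite !inE eqxx /= => /esym /orP [/eqP // | /eqP uv].
  by have := subsetP G_simple _ uvG; rewrite inE uv setUid cards1.
apply: subset_leq_card; apply/subsetP => e /imsetP [u]; rewrite inE => /andP [uS uvG] ->.
by rewrite !inE uvG subUset !sub1set uS vS eqxx orbT.
Qed.

Lemma card_edge_meet (e T : {set 'I_n}) : e \in G ->
  (#|[pred v in T | v \in e]| <= 1 + (e \subset T))%N.
Proof.
move/(subsetP G_simple); rewrite inE => /eqP e2.
have -> : #|[pred v in T | v \in e]| = #|e :&: T|.
  by apply: eq_card => v; rewrite !inE andbC.
have [eT | eNT] := boolP (e \subset T); first by rewrite (setIidPl eT) e2.
have : e :&: T \proper e by rewrite properEneq subsetIl andbT; apply: contra eNT => /eqP <-; exact: subsetIr.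
by move/proper_card; rewrite e2.
Qed.

(* Double counting: the degrees into S of the vertices of T sum to at most
   e_G(S) + e_G(T), each edge of S being counted once, or twice if it lies in T. *)
Lemma sum_degS_le (S T : {set 'I_n}) : T \subset S ->
  (\sum_(v in T) degS G S v <= edges_in S + edges_in T)%N.
Proof.
move=> TS.
apply: (@leq_trans (\sum_(v in T) \sum_(e | (e \in G) && (e \subset S) && (v \in e)) 1)%N).
  apply: leq_sum => v vT; rewrite sum1_card.
  apply: leq_trans (degS_le_incident (subsetP TS _ vT)) (eq_leq _).
  by apply: eq_card => e; rewrite !inE andbA.
rewrite (exchange_big_dep (fun e => (e \in G) && (e \subset S))) /=; last by move=> v e _ /andP [].
apply: (@leq_trans (\sum_(e | (e \in G) && (e \subset S)) (1 + (e \subset T)))%N).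
  apply: leq_sum => e /andP [eG eS]; rewrite sum1_card.
  apply: leq_trans (eq_leq _) (card_edge_meet T eG).
  by apply: eq_card => v; rewrite !inE /= eG eS.
rewrite big_split /= sum1_card /edges_in.
apply: leq_add; first by apply: eq_leq; apply: eq_card => e; rewrite !inE.
rewrite -sum1_card big_mkcondr /=.
have -> : (\sum_(e in [set e in G | e \subset T]) 1 = \sum_(e in G) (e \subset T))%N.
  rewrite big_mkcond [RHS]big_mkcond; apply: eq_bigr => e _.
  by rewrite inE; case: (e \in G); case: (e \subset T).
by apply: leq_sum => e _; case: ifP.
Qed.

End DegreeCounting.

Lemma Rleb_iff x y : Rleb x y = true <-> x <= y.
Proof. by rewrite /Rleb; case: Rle_dec. Qed.

Definition has_dense_set (n : nat) (sigma c : R) (G : {set {set 'I_n}}) : bool :=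
  [exists U : {set 'I_n}, [&& (0 < #|U|)%N, Rleb (INR #|U|) (sigma * INR n)
     & Rleb (c * INR #|U|) (INR (edges_in G U))]].

(* Reduction to dense sets: if T \subseteq S is a bad pair, then either T
   spans theta |T| edges, or else the degree count forces S to span at least
   (Delta - 2 theta) tau |S| edges. *)
Lemma bad_pair_dense n (sigma tau Delta theta : R) (G : {set {set 'I_n}}) :
  G \subset edges n -> 0 < tau -> 0 <= theta -> 0 < Delta - 2 * theta ->
  bad_pair sigma tau Delta G ->
  has_dense_set sigma theta G || has_dense_set sigma ((Delta - 2 * theta) * tau) G.
Proof.
move=> GE tau0 theta0 gap /existsP [S /existsP [T /and5P [TS S0 /Rleb_iff Ssmall /Rleb_iff Tbig /forallP Tdeg]]].
have Spos : 0 < INR #|S| by apply: lt_0_INR; apply/ltP.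
have TleS : INR #|T| <= INR #|S| by apply/le_INR/leP/subset_leq_card.
have degree_sum : Delta * INR #|T| <= INR (edges_in G S) + INR (edges_in G T).
  rewrite -plus_INR; apply: Rle_trans (le_INR _ _ (leP (sum_degS_le GE TS))).
  rewrite INR_sum Rmult_comm -big_Rconst; apply: big_Rle => v vT.
  by move: (Tdeg v); rewrite vT => /Rleb_iff.
have [Tdense | Tsparse] := Rle_dec (theta * INR #|T|) (INR (edges_in G T)).
  apply/orP; left; apply/existsP; exists T.
  have T0 : (0 < #|T|)%N.
    have : 0 < INR #|T| by nra.
    by case: #|T| => [/= | //]; lra.
  rewrite T0 /=; apply/andP; split; apply/Rleb_iff; [exact: Rle_trans TleS Ssmall | exact: Tdense].
apply/orP; right; apply/existsP; exists S; rewrite S0 /=.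
have Sdense : (Delta - 2 * theta) * tau * INR #|S| <= INR (edges_in G S).
  have := Rmult_le_compat_l _ _ _ (Rlt_le _ _ gap) Tbig.
  have := Rmult_le_pos _ _ theta0 (pos_INR #|T|); nra.
by apply/andP; split; apply/Rleb_iff.
Qed.

Definition nceil (x : R) : nat := Z.to_nat (1 - up (- x)).

Lemma nceil_ge x : 0 <= x -> x <= INR (nceil x).
Proof.
move=> x0; rewrite /nceil; have [h1 h2] := archimed (- x).
have hz : (0 <= 1 - up (- x))%Z by apply: le_IZR; rewrite minus_IZR; lra.
rewrite INR_IZR_INZ Z2Nat.id // minus_IZR; lra.
Qed.

Lemma nceil_le x (k : nat) : x <= INR k -> (nceil x <= k)%N.
Proof.
move=> xk; rewrite /nceil; have [h1 h2] := archimed (- x).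
have : (- Z.of_nat k < up (- x))%Z by apply: lt_IZR; rewrite opp_IZR -INR_IZR_INZ; lra.
by move=> h; apply/leP; lia.
Qed.

Lemma exists_subset_card (T : finType) (A : {set T}) k : (k <= #|A|)%N ->
  exists2 K : {set T}, K \subset A & #|K| = k.
Proof.
move=> kA; have : (0 < #|[set K : {set T} | K \subset A & #|K| == k]|)%N.
  by rewrite cards_draws bin_gt0.
by case/card_gt0P => K; rewrite inE => /andP [KA /eqP Kk]; exists K.
Qed.

Lemma sum_by_card (X : finType) (P : pred nat) (g : nat -> R) :
  \big[Rplus/R0]_(U : {set X} | P #|U|) g #|U| =
  \big[Rplus/R0]_(s < #|X|.+1 | P s) (INR 'C(#|X|, s) * g s).
Proof.
have size_ok (U : {set X}) : (#|U| < #|X|.+1)%N by rewrite ltnS max_card.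
rewrite (partition_big (fun U : {set X} => Ordinal (size_ok U)) (fun s : 'I_#|X|.+1 => P s)) //.
apply: eq_bigr => s Ps; rewrite -card_draws -big_Rconst.
apply: eq_big => [U | U /andP [_ /eqP <-] //].
by rewrite inE -val_eqE /= andb_idl // => /eqP ->.
Qed.

Section FirstMoment.

Variables (n : nat) (p : R).
Hypothesis p01 : 0 <= p <= 1.

Definition pairs_in (U : {set 'I_n}) : {set {set 'I_n}} :=
  [set e : {set 'I_n} | e \subset U & #|e| == 2%N].

(* U spans k edges only if one of the C(C(|U|,2), k) k-sets of pairs in U is
   present, each with probability p^k. *)
Lemma gnp_many_edges (U : {set 'I_n}) (k : nat) :
  gnp_prob p (fun G => k <= edges_in G U)%N <= INR 'C('C(#|U|, 2), k) * p ^ k.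
Proof.
pose J (K : {set {set 'I_n}}) := (K \subset pairs_in U) && (#|K| == k).
apply: Rle_trans (@gnp_union_bound _ _ p01 _ J _ (fun K G => K \subset G) _) _.
  move=> G GE kU; have [K KG Kk] := exists_subset_card kU.
  exists K => //; last by apply: subset_trans KG _; apply/subsetP => e; rewrite inE => /andP [].
  rewrite /J Kk eqxx andbT; apply/subsetP => e /(subsetP KG); rewrite !inE => /andP [eG eU].
  by rewrite eU; have := subsetP GE _ eG; rewrite inE.
have card_pairs : #|pairs_in U| = 'C(#|U|, 2) by rewrite cards_draws.
rewrite -card_pairs -cards_draws -big_Rconst; apply: Req_le; apply: eq_big => [K | K].
  by rewrite inE.
move=> /andP [KU /eqP <-]; apply: gnp_prob_contains.
by apply: subset_trans KU _; apply/subsetP => e; rewrite !inE => /andP [].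
Qed.

Lemma gnp_dense_set_ub (sigma c : R) :
  gnp_prob p (@has_dense_set n sigma c) <=
  \big[Rplus/R0]_(s < n.+1 | (0 < s)%N && Rleb (INR s) (sigma * INR n))
     (INR 'C(n, s) * (INR 'C('C(s, 2), nceil (c * INR s)) * p ^ nceil (c * INR s))).
Proof.
pose J (U : {set 'I_n}) := (0 < #|U|)%N && Rleb (INR #|U|) (sigma * INR n).
pose Q (U : {set 'I_n}) (G : {set {set 'I_n}}) := (nceil (c * INR #|U|) <= edges_in G U)%N.
apply: Rle_trans (@gnp_union_bound _ _ p01 _ J _ Q _) _.
  move=> G _ /existsP [U /and3P [U0 Usmall /Rleb_iff Udense]].
  by exists U; [rewrite /J U0 | exact: nceil_le].
apply: Rle_trans (big_Rle _ (fun U _ => gnp_many_edges U _)) _.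
rewrite (sum_by_card _ (fun s => (0 < s)%N && Rleb (INR s) (sigma * INR n))
  (fun s => INR 'C('C(s, 2), nceil (c * INR s)) * p ^ nceil (c * INR s))) card_ord.
by apply: Req_le.
Qed.

End FirstMoment.

Lemma e_ge2 : 2 <= exp 1.
Proof. have := exp_ineq1_le 1; lra. Qed.

Lemma exp_pow_INR x k : exp x ^ k = exp (INR k * x).
Proof.
elim: k => [|k IH]; first by rewrite /= Rmult_0_l exp_0.
by rewrite S_INR /= IH -exp_plus; congr exp; ring.
Qed.

Lemma INR_expn N k : INR (N ^ k)%N = INR N ^ k.
Proof. by elim: k => [|k IH] //; rewrite expnS -multE mult_INR IH. Qed.

(* (k+1)^k <= e k^k, since (1 + 1/k)^k <= (e^(1/k))^k. *)
Lemma succ_pow_le k : (INR k + 1) ^ k <= exp 1 * INR k ^ k.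
Proof.
case: k => [|k]; first by rewrite /=; have := e_ge2; lra.
set x := INR k.+1; have x0 : 0 < x by apply: lt_0_INR; lia.
have -> : x + 1 = x * (1 + / x) by field; lra.
rewrite Rpow_mult_distr Rmult_comm; apply: Rmult_le_compat_r; first by apply: pow_le; lra.
have -> : exp 1 = exp (/ x) ^ k.+1 by rewrite exp_pow_INR -/x Rinv_r; lra.
apply: pow_incr; split; last exact: exp_ineq1_le.
by have := Rinv_0_lt_compat _ x0; lra.
Qed.

Lemma pow_le_fact k : INR k ^ k <= INR k`! * exp 1 ^ k.
Proof.
elim: k => [|k IH]; first by rewrite /=; lra.
rewrite factS mult_INR S_INR /=.
have k0 := pos_INR k; have e0 := exp_pos 1.
have := Rmult_le_compat_l (INR k + 1) _ _ ltac:(lra) (succ_pow_le k).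
have := Rmult_le_compat_l ((INR k + 1) * exp 1) _ _ ltac:(nra) IH.
nra.
Qed.

Lemma ffact_le_expn N k : (N ^_ k <= N ^ k)%N.
Proof.
elim: k N => [|k IH] N //; rewrite ffactnS expnS leq_mul //.
apply: leq_trans (IH _) _; case: k {IH} => [|k]; last by rewrite leq_exp2r // leq_pred.
by rewrite !expn0.
Qed.

Lemma binom_ub N k : (0 < k)%N -> INR 'C(N, k) <= (exp 1 * INR N / INR k) ^ k.
Proof.
move=> k0; have K0 : 0 < INR k by apply: lt_0_INR; apply/ltP.
have C_fact : INR 'C(N, k) * INR k`! <= INR N ^ k.
  rewrite -mult_INR multE bin_ffact -INR_expn; apply/le_INR/leP; exact: ffact_le_expn.
have Kk : 0 < INR k ^ k by apply: pow_lt.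
have C0 := pos_INR 'C(N, k); have ek := pow_le _ k (Rlt_le _ _ (exp_pos 1)).
rewrite /Rdiv !Rpow_mult_distr pow_inv.
apply: (Rmult_le_reg_r (INR k ^ k)) => //; rewrite Rmult_assoc Rinv_l ?Rmult_1_r; last lra.
have := Rmult_le_compat_l _ _ _ C0 (pow_le_fact k); nra.
Qed.

Lemma bin2_le s : INR 'C(s, 2) <= INR s ^ 2 / 2.
Proof.
have : ('C(s, 2) * 2`! <= s ^ 2)%N by rewrite bin_ffact; exact: ffact_le_expn.
by move/leP/le_INR; rewrite -INR_expn mult_INR /=; lra.
Qed.

Lemma Rpower_pos x y : 0 < Rpower x y.
Proof. exact: exp_pos. Qed.

Lemma exp_le_mono x y : x <= y -> exp x <= exp y.
Proof. by case=> [xy | ->]; [left; exact: exp_increasing | right]. Qed.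

Lemma ln_nonpos y : 0 < y <= 1 -> ln y <= 0.
Proof. by case=> y0 [y1 | ->]; [rewrite -ln_1; left; exact: ln_increasing | rewrite ln_1; right]. Qed.

Lemma pow_le_Rpower y x k : 0 < y <= 1 -> x <= INR k -> y ^ k <= Rpower y x.
Proof.
move=> y01 xk; rewrite -Rpower_pow; last by case: y01.
by apply: exp_le_mono; have := ln_nonpos y01; nra.
Qed.

Section SizeTerm.

Variables (sigma c d : R).
Hypotheses (c1 : 1 < c) (sigma01 : 0 < sigma <= 1) (d0 : 0 < d).

Let a := sigma * exp 1 * d / (2 * c).

Hypothesis density : Rpower a c <= sigma / (2 * exp 1).

Lemma density_base_lt1 : a < 1.
Proof.
have e2 := e_ge2; apply: Rnot_le_lt => a1.
have := Rle_Rpower a 0 c a1 ltac:(lra); rewrite Rpower_O; last lra.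
suff : sigma / (2 * exp 1) < 1 by lra.
apply: (Rmult_lt_reg_r (2 * exp 1)); first lra.
rewrite /Rdiv Rmult_assoc Rinv_l; lra.
Qed.

Lemma density_base_pos : 0 < a.
Proof.
have e0 := exp_pos 1; rewrite /a.
by apply: Rdiv_lt_0_compat; [apply: Rmult_lt_0_compat; [apply: Rmult_lt_0_compat |] |]; lra.
Qed.

Variables (n s : nat).
Hypotheses (s0 : (0 < s)%N) (s_small : INR s <= sigma * INR n).

Let z := INR s / (sigma * INR n).

Let S0 : 0 < INR s. Proof. by apply: lt_0_INR; apply/ltP. Qed.
Let N0 : 0 < INR n. Proof. by apply: (Rmult_lt_reg_l sigma); lra. Qed.

Lemma rel_size_range : 0 < z <= 1.
Proof.
split; first by apply: Rdiv_lt_0_compat; nra.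
by apply: (Rmult_le_reg_r (sigma * INR n)); [nra | rewrite /z /Rdiv Rmult_assoc Rinv_l; lra].
Qed.

(* Choosing k >= c s of the C(s,2) pairs inside the set: with C(N,k) <= (eN/k)^k
   and C(s,2) <= s^2/2 the expected count is at most (a z)^k. *)
Lemma edge_choice_bound k : c * INR s <= INR k ->
  INR 'C('C(s, 2), k) * (d / INR n) ^ k <= (a * z) ^ k.
Proof.
move=> ks; have K0 : 0 < INR k by nra.
have k0 : (0 < k)%N by apply/ltP/INR_lt; rewrite /=; lra.
have e0 := exp_pos 1; have M0 := pos_INR 'C(s, 2); have M2 := bin2_le s.
apply: Rle_trans (Rmult_le_compat_r _ _ _ (pow_le _ k (Rlt_le _ _ (Rdiv_lt_0_compat _ _ d0 N0)))
                   (binom_ub _ k0)) _.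
rewrite -Rpow_mult_distr.
have dn0 : 0 < d / INR n by apply: Rdiv_lt_0_compat.
have ratio : INR 'C(s, 2) / INR k <= (INR s ^ 2 / 2) / (c * INR s).
  apply: Rmult_le_compat => //; first by left; apply: Rinv_0_lt_compat.
  by apply: Rinv_le_contravar => //; nra.
have -> : a * z = (exp 1 * (d / INR n)) * ((INR s ^ 2 / 2) / (c * INR s)).
  by rewrite /a /z; field; repeat split; lra.
have -> : exp 1 * INR 'C(s, 2) / INR k * (d / INR n) = (exp 1 * (d / INR n)) * (INR 'C(s, 2) / INR k).
  by field; lra.
apply: pow_incr; split; last by apply: Rmult_le_compat_l; nra.
by apply: Rmult_le_pos; [nra | apply: Rmult_le_pos => //; left; apply: Rinv_0_lt_compat].
Qed.

(* The C(n, s) <= (e n / s)^s choices of the vertex set are compensated by the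
   density condition: (e n / s) (a z)^c = (e / sigma) a^c z^(c-1) <= z^(c-1) / 2. *)
Lemma vertex_factor_bound :
  exp 1 * INR n / INR s * Rpower (a * z) c <= Rpower z (c - 1) / 2.
Proof.
have [z0 _] := rel_size_range; have a0 := density_base_pos.
have e0 := exp_pos 1; have zc0 := Rpower_pos z (c - 1).
rewrite -Rpower_mult_distr //.
have -> : Rpower z c = Rpower z (c - 1) * z.
  by rewrite -{3}(Rpower_1 z z0) -Rpower_plus; congr Rpower; ring.
have -> : exp 1 * INR n / INR s * (Rpower a c * (Rpower z (c - 1) * z)) =
          (exp 1 / sigma) * Rpower a c * Rpower z (c - 1).
  by rewrite /z; field; repeat split; lra.
have -> : Rpower z (c - 1) / 2 = (exp 1 / sigma) * (sigma / (2 * exp 1)) * Rpower z (c - 1).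
  by field; lra.
apply: Rmult_le_compat_r; first lra.
by apply: Rmult_le_compat_l => //; left; apply: Rdiv_lt_0_compat; lra.
Qed.

Lemma size_term_bound :
  INR 'C(n, s) * (INR 'C('C(s, 2), nceil (c * INR s)) * (d / INR n) ^ nceil (c * INR s))
    <= (Rpower z (c - 1) / 2) ^ s.
Proof.
have [z0 z1] := rel_size_range; have a0 := density_base_pos; have a1 := density_base_lt1.
set k := nceil (c * INR s).
have ks : c * INR s <= INR k by apply: nceil_ge; nra.
have az01 : 0 < a * z <= 1 by split; nra.
have pow_k : (a * z) ^ k <= Rpower (a * z) c ^ s.
  rewrite -[X in _ <= X]Rpower_pow ?Rpower_mult; [exact: pow_le_Rpower | exact: Rpower_pos].
have vertices := binom_ub n s0.
have e0 := exp_pos 1; have C0 := pos_INR 'C(n, s).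
apply: Rle_trans (_ : (exp 1 * INR n / INR s) ^ s * Rpower (a * z) c ^ s <= _).
  apply: Rmult_le_compat => //.
    by apply: Rmult_le_pos; [exact: pos_INR | apply: pow_le; left; apply: Rdiv_lt_0_compat].
  exact: Rle_trans (edge_choice_bound ks) pow_k.
rewrite -Rpow_mult_distr; apply: pow_incr; split; last exact: vertex_factor_bound.
by apply: Rmult_le_pos; [left; apply: Rdiv_lt_0_compat; nra | left; exact: Rpower_pos].
Qed.

End SizeTerm.

Lemma head_sum_le (s0 m : nat) (B : R) : 0 <= B ->
  \big[Rplus/R0]_(0 <= s < m) (if (s <= s0)%N then B else 0) <= INR s0.+1 * B.
Proof.
move=> B0; suff : \big[Rplus/R0]_(0 <= s < m) (if (s <= s0)%N then B else 0) = INR (minn m s0.+1) * B.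
  by move=> ->; apply: Rmult_le_compat_r => //; apply/le_INR/leP; exact: geq_minr.
elim: m => [|m IH]; first by rewrite big_nil /=; ring.
rewrite big_nat_recr //= IH; case: (leqP m s0) => ms0.
  by rewrite minnSS (minn_idPl ms0) (minn_idPl (leqW ms0)) S_INR; ring.
by rewrite (minn_idPr (leqW ms0)) (minn_idPr ms0); ring.
Qed.

Lemma geometric_tail_le (s0 m : nat) :
  \big[Rplus/R0]_(0 <= s < m) (if (s0 < s)%N then (/2) ^ s else 0) <= (/2) ^ s0.
Proof.
suff tail : \big[Rplus/R0]_(0 <= s < m) (if (s0 < s)%N then (/2) ^ s else 0)
             = (/2) ^ s0 - (/2) ^ (maxn m.-1 s0).
  by rewrite tail; have := pow_le (/2) (maxn m.-1 s0); lra.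
elim: m => [|m IH]; first by rewrite big_nil /= max0n; ring.
rewrite big_nat_recr //= IH; case: (ltnP s0 m) => ms0.
  case: m ms0 {IH} => [//|m] ms0; rewrite (maxn_idPl (_ : s0 <= m)%N) //=; field.
by rewrite (maxn_idPr (leq_trans (leq_pred m) ms0)); ring.
Qed.

Lemma Rpower_le1 z u : 0 < z <= 1 -> 0 <= u -> Rpower z u <= 1.
Proof.
move=> z01 u0; rewrite -(Rpower_O z); last by case: z01.
by apply: exp_le_mono; have := ln_nonpos z01; nra.
Qed.

Lemma pow_le_base t k : 0 <= t <= 1 -> (0 < k)%N -> t ^ k <= t.
Proof. by move=> t01; case: k => [//|k] _ /=; have := pow_incr t 1 k t01; rewrite pow1; nra. Qed.

(* Summing the bounds (z_s^(c-1) / 2)^s, z_s = s / (sigma n), over the sizes s: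
   the terms with s <= s0 are at most z_(s0)^(c-1) / 2 each, the others at
   most 2^-s. *)
Lemma size_sum_bound (n s0 : nat) (sigma c : R) : 1 < c -> 0 < sigma -> 0 < INR n ->
  \big[Rplus/R0]_(s < n.+1 | (0 < s)%N && Rleb (INR s) (sigma * INR n))
      (Rpower (INR s / (sigma * INR n)) (c - 1) / 2) ^ s
   <= INR s0.+1 * (Rpower (INR s0 / (sigma * INR n)) (c - 1) / 2) + (/2) ^ s0.
Proof.
move=> c1 sigma0 n0.
set B := Rpower (INR s0 / (sigma * INR n)) (c - 1) / 2.
have B0 : 0 <= B by rewrite /B; have := Rpower_pos (INR s0 / (sigma * INR n)) (c - 1); lra.
rewrite -(big_mkord (fun s => (0 < s)%N && Rleb (INR s) (sigma * INR n))
   (fun s => (Rpower (INR s / (sigma * INR n)) (c - 1) / 2) ^ s)) big_mkcond /=.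
apply: Rle_trans (_ : \big[Rplus/R0]_(0 <= s < n.+1)
   ((if (s <= s0)%N then B else 0) + (if (s0 < s)%N then (/2) ^ s else 0)) <= _); last first.
  by rewrite big_split /=; apply: Rplus_le_compat; [exact: head_sum_le | exact: geometric_tail_le].
apply: big_Rle => s _; have half_s := pow_le (/2) s ltac:(lra).
case: ifP => [/andP [s_pos /Rleb_iff s_small] | _]; last by case: leqP; case: ltnP; lra.
have S0 : 0 < INR s by apply: lt_0_INR; apply/ltP.
set z := INR s / (sigma * INR n).
have z01 : 0 < z <= 1.
  split; first by apply: Rdiv_lt_0_compat => //; nra.
  by apply: (Rmult_le_reg_r (sigma * INR n)); [nra | rewrite /z /Rdiv Rmult_assoc Rinv_l; lra].
have t01 : 0 < Rpower z (c - 1) / 2 <= / 2.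
  by have := Rpower_pos z (c - 1); have := Rpower_le1 z01 (_ : 0 <= c - 1); lra.
case: (leqP s s0) => ss0.
  have zz0 : Rpower z (c - 1) <= Rpower (INR s0 / (sigma * INR n)) (c - 1).
    apply: Rle_Rpower_l; first lra; split; first lra.
    by apply: Rmult_le_compat_r; [left; apply: Rinv_0_lt_compat; nra | apply/le_INR/leP].
  have := pow_le_base (_ : 0 <= Rpower z (c - 1) / 2 <= 1) s_pos; rewrite /B; lra.
have := pow_incr _ _ s (_ : 0 <= Rpower z (c - 1) / 2 <= / 2); lra.
Qed.

Definition ultimately (P : nat -> Prop) : Prop := exists N, forall n, (N <= n)%N -> P n.

Lemma ultimately_and (P Q : nat -> Prop) :
  ultimately P -> ultimately Q -> ultimately (fun n => P n /\ Q n).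
Proof.
move=> [N1 PN] [N2 QN]; exists (maxn N1 N2) => n.
by rewrite geq_max => /andP [n1 n2]; split; [exact: PN | exact: QN].
Qed.

Lemma ultimately_impl (P Q : nat -> Prop) :
  (forall n, P n -> Q n) -> ultimately P -> ultimately Q.
Proof. by move=> PQ [N PN]; exists N => n /PN /PQ. Qed.

Lemma ultimately_INR_gt (r : R) : ultimately (fun n => r < INR n).
Proof.
have [up_r _] := archimed r; exists (Z.to_nat (up r)) => n /leP nN.
apply: Rlt_le_trans up_r _; apply: Rle_trans (le_INR _ _ nN).
case: (Z_lt_le_dec (up r) 0) => [neg | nonneg]; last by rewrite INR_IZR_INZ Z2Nat.id //; lra.
have -> : Z.to_nat (up r) = 0%N by lia.
by have := IZR_lt _ _ neg; rewrite /=; lra.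
Qed.

Lemma ultimately_Rpower_small (K u delta : R) : 0 < K -> 0 < u -> 0 < delta ->
  ultimately (fun n => Rpower (K / INR n) u < delta).
Proof.
move=> K0 u0 delta0; set rho := Rpower delta (/ u).
have rho0 : 0 < rho := Rpower_pos _ _.
apply: ultimately_impl (ultimately_INR_gt (K / rho)) => n n_big.
have n0 : 0 < INR n by apply: Rlt_trans n_big; apply: Rdiv_lt_0_compat.
have -> : delta = Rpower rho u by rewrite /rho Rpower_mult Rinv_l ?Rpower_1 //; lra.
apply: Rlt_Rpower_l => //; split; first exact: Rdiv_lt_0_compat.
apply: (Rmult_lt_reg_r (INR n)) => //; rewrite /Rdiv Rmult_assoc Rinv_l; last lra.
have : K < INR n * rho.
  apply: (Rmult_lt_reg_r (/ rho)); first exact: Rinv_0_lt_compat.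
  by rewrite Rmult_assoc Rinv_r ?Rmult_1_r; lra.
lra.
Qed.

Lemma density_bounds_degree (sigma c d : R) : 1 < c -> 0 < sigma <= 1 ->
  Rpower (sigma * exp 1 * d / (2 * c)) c <= sigma / (2 * exp 1) ->
  d < 2 * c / (sigma * exp 1).
Proof.
move=> c1 sigma01 density; have a1 := density_base_lt1 c1 sigma01 density.
have e0 := exp_pos 1; have se0 : 0 < sigma * exp 1 by nra.
apply: (Rmult_lt_reg_r (sigma * exp 1 / (2 * c))); first by apply: Rdiv_lt_0_compat; lra.
have -> : 2 * c / (sigma * exp 1) * (sigma * exp 1 / (2 * c)) = 1 by field; lra.
by have -> : d * (sigma * exp 1 / (2 * c)) = sigma * exp 1 * d / (2 * c) by field; lra.
Qed.

Lemma edge_prob_valid (d : nat -> R) (sigma c : R) : 1 < c -> 0 < sigma <= 1 ->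
  ultimately (fun n => 0 < d n) ->
  ultimately (fun n => Rpower (sigma * exp 1 * d n / (2 * c)) c <= sigma / (2 * exp 1)) ->
  ultimately (fun n => 0 < INR n /\ 0 <= d n / INR n <= 1).
Proof.
move=> c1 sigma01 d_pos density.
have bound := ultimately_INR_gt (2 * c / (sigma * exp 1)).
apply: ultimately_impl (ultimately_and (ultimately_and d_pos density) bound) => n [[dn densn] n_big].
have dlt := density_bounds_degree c1 sigma01 densn.
have n0 : 0 < INR n by lra.
split=> //; split; first by left; apply: Rdiv_lt_0_compat.
by apply: (Rmult_le_reg_r (INR n)) => //; rewrite /Rdiv Rmult_assoc Rinv_l; lra.
Qed.

(* Fix s0 with 2^-s0 < eps/2; the sizes s <= s0
   contribute O((s0 / n)^(c-1)) and the larger ones at most 2^-s0. *)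
Lemma gnp_dense_sets_vanish (d : nat -> R) (sigma c : R) : 1 < c -> 0 < sigma <= 1 ->
  ultimately (fun n => 0 < d n) ->
  ultimately (fun n => Rpower (sigma * exp 1 * d n / (2 * c)) c <= sigma / (2 * exp 1)) ->
  forall eps, 0 < eps ->
  ultimately (fun n => gnp_prob (d n / INR n) (@has_dense_set n sigma c) < eps).
Proof.
move=> c1 sigma01 d_pos density eps eps0.
have [M tail] := pow_lt_1_zero (/2) ltac:(rewrite Rabs_pos_eq; lra) (eps / 2) ltac:(lra).
set s0 := M.+1.
have tail_s0 : (/2) ^ s0 < eps / 2.
  by have := tail s0 (le_S _ _ (le_n M)); rewrite Rabs_pos_eq //; apply: pow_le; lra.
have S0 : 0 < INR s0.+1 by apply: lt_0_INR; lia.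
have head := @ultimately_Rpower_small (INR s0 / sigma) (c - 1) (eps / INR s0.+1)
  ltac:(apply: Rdiv_lt_0_compat; [apply: lt_0_INR; lia | lra]) ltac:(lra) ltac:(exact: Rdiv_lt_0_compat).
apply: ultimately_impl (ultimately_and (ultimately_and d_pos density)
  (ultimately_and (edge_prob_valid c1 sigma01 d_pos density) head)) => n [[dn densn] [[n0 pn] headn]].
apply: Rle_lt_trans (gnp_dense_set_ub n pn sigma c) _.
apply: Rle_lt_trans (@big_Rle _ _ _ _
  (fun s : 'I_n.+1 => (Rpower (INR s / (sigma * INR n)) (c - 1) / 2) ^ s) _) _.
  by move=> s /andP [s_pos /Rleb_iff s_small]; exact: size_term_bound.
apply: Rle_lt_trans (size_sum_bound s0 c1 (proj1 sigma01) n0) _.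
have -> : INR s0 / (sigma * INR n) = INR s0 / sigma / INR n by field; lra.
have := Rmult_lt_compat_l _ _ _ S0 headn.
have -> : INR s0.+1 * (eps / INR s0.+1) = eps by field; lra.
lra.
Qed.

(* The hypothesis on m = (Delta - 2 theta) tau yields the density condition
   for c = m in the form used above: halving the base and doubling the bound. *)
Lemma density_condition_halved (d : nat -> R) (sigma m : R) : 0 < sigma -> 0 < m ->
  ultimately (fun n => 0 < d n) ->
  ultimately (fun n => Rpower (sigma * exp 1 * d n / m) m <= sigma / (4 * exp 1)) ->
  ultimately (fun n => Rpower (sigma * exp 1 * d n / (2 * m)) m <= sigma / (2 * exp 1)).
Proof.
move=> sigma0 m0 d_pos density; have e0 := exp_pos 1.
apply: ultimately_impl (ultimately_and d_pos density) => n [dn densn].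
have x0 : 0 < sigma * exp 1 * d n / m.
  by apply: Rdiv_lt_0_compat => //; apply: Rmult_lt_0_compat => //; apply: Rmult_lt_0_compat.
have -> : sigma * exp 1 * d n / (2 * m) = sigma * exp 1 * d n / m / 2 by field; lra.
have halve : Rpower (sigma * exp 1 * d n / m / 2) m <= Rpower (sigma * exp 1 * d n / m) m.
  by apply: Rle_Rpower_l; lra.
suff : sigma / (4 * exp 1) <= sigma / (2 * exp 1) by lra.
by apply: Rmult_le_compat_l; [lra | apply: Rinv_le_contravar; lra].
Qed.

Unset Implicit Arguments.
Theorem lemma2 (d : nat -> R) (sigma theta Delta tau : R) :
  1 < theta -> 0 < sigma <= 1 ->
  (exists N : nat, forall n : nat, (N <= n)%N -> 0 < d n) ->
  (exists N : nat, forall n : nat, (N <= n)%N ->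
     Rpower (sigma * exp 1 * d n / (2 * theta)) theta <= sigma / (2 * exp 1)) ->
  Un_cv (fun n => d n / Rpower (INR n) (1 - 1 / theta)) 0 ->
  0 < Delta -> 0 < tau ->
  1 < (Delta - 2 * theta) * tau ->
  (exists N : nat, forall n : nat, (N <= n)%N ->
     Rpower (sigma * exp 1 * d n / ((Delta - 2 * theta) * tau)) ((Delta - 2 * theta) * tau)
       <= sigma / (4 * exp 1)) ->
  Un_cv (fun n => d n / Rpower (INR n) (1 - 1 / ((Delta - 2 * theta) * tau))) 0 ->
  Un_cv (fun n => gnp_prob (d n / INR n) (fun G : {set {set 'I_n}} => ~~ bad_pair sigma tau Delta G)) 1.
Proof.
move=> theta1 sigma01 d_pos density_theta _ _ tau0 m1 density_m _ eps eps0.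
set m := (Delta - 2 * theta) * tau in m1 density_m.
have gap : 0 < Delta - 2 * theta.
  by apply: Rnot_le_lt => h; have := Rmult_le_compat_r tau _ _ (Rlt_le _ _ tau0) h; rewrite /m in m1; lra.
have density_m' := density_condition_halved (proj1 sigma01) (Rlt_trans _ _ _ Rlt_0_1 m1) d_pos density_m.
have [N1 sparse_theta] := @gnp_dense_sets_vanish _ _ _ theta1 sigma01 d_pos density_theta (eps / 2) ltac:(lra).
have [N2 sparse_m] := @gnp_dense_sets_vanish _ _ _ m1 sigma01 d_pos density_m' (eps / 2) ltac:(lra).
have [N3 valid] := edge_prob_valid theta1 sigma01 d_pos density_theta.
exists (N1 + N2 + N3)%N => n /leP nN.
have [_ pn] := valid n ltac:(lia).
have sparse_theta_n := sparse_theta n ltac:(lia).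
have sparse_m_n := sparse_m n ltac:(lia).
set p := d n / INR n in pn sparse_theta_n sparse_m_n *.
have bad_le : gnp_prob p (@bad_pair n sigma tau Delta)
    <= gnp_prob p (@has_dense_set n sigma theta) + gnp_prob p (@has_dense_set n sigma m).
  apply: (@gnp_prob_le_union _ n pn) => G GE.
  exact: (bad_pair_dense GE tau0 (Rlt_le _ _ (Rlt_trans _ _ _ Rlt_0_1 theta1)) gap).
have bad_ge0 := @gnp_prob_ge0 _ n pn (bad_pair sigma tau Delta).
by rewrite /R_dist gnp_probC Rabs_left1; lra.
Qed.
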